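(* For metric formulas $\psi,\varphi$, over strict timed traces, and for $n>0$: $\psi\,\mathsf{U}_{[n,n]}\,\varphi\equiv\psi\wedge\bigvee_{i=1}^n\bigcirc_{[i,i]}(\psi\,\mathsf{U}_{[n-i,n-i]}\,\varphi)$; $\psi\,\mathsf{R}_{[n,n]}\,\varphi\equiv\psi\vee\bigwedge_{i=1}^n\widehat{\bigcirc}_{[i,i]}(\psi\,\mathsf{R}_{[n-i,n-i]}\,\varphi)$; $\Diamond_{[n,n]}\varphi\equiv\bigvee_{i=1}^n\bigcirc_{[i,i]}\Diamond_{[n-i,n-i]}\varphi$; $\Box_{[n,n]}\varphi\equiv\bigwedge_{i=1}^n\widehat{\bigcirc}_{[i,i]}\Box_{[n-i,n-i]}\varphi$; and the same holds for the dual past operators (replacing $\mathsf{U},\mathsf{R},\bigcirc,\widehat{\bigcirc},\Diamond,\Box$ by $\mathsf{S},\mathsf{T},\bullet,\widehat{\bullet}$, eventually before ($\top\,\mathsf{S}\,\cdot$), $\blacksquare$, respectively).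
   Context: Metric formulas over $\mathcal{A}$: $\varphi ::= p \mid \bot \mid \varphi_1\otimes\varphi_2 \mid \bullet_I\varphi \mid \varphi_1\,\mathsf{S}_I\,\varphi_2 \mid \varphi_1\,\mathsf{T}_I\,\varphi_2 \mid \bigcirc_I\varphi \mid \varphi_1\,\mathsf{U}_I\,\varphi_2 \mid \varphi_1\,\mathsf{R}_I\,\varphi_2$, $\otimes\in\{\to,\wedge,\vee\}$, $I=[m,n)$; $[m,n]$ abbreviates $[m,n+1)$. Derived: $\neg\varphi=\varphi\to\bot$, $\top=\neg\bot$, $\blacksquare_I\varphi=\bot\,\mathsf{T}_I\,\varphi$, eventually before $=\top\,\mathsf{S}_I\,\varphi$, $\widehat{\bullet}_I\varphi=\bullet_I\varphi\vee\neg\bullet_I\top$, $\Box_I\varphi=\bot\,\mathsf{R}_I\,\varphi$, $\Diamond_I\varphi=\top\,\mathsf{U}_I\,\varphi$, $\widehat{\bigcirc}_I\varphi=\bigcirc_I\varphi\vee\neg\bigcirc_I\top$. Timed HT-trace $\mathbf{M}=(\langle\mathbf{H},\mathbf{T}\rangle,\tau)$ of length $\lambda$: $H_i\subseteq T_i\subseteq\mathcal{A}$, $\tau:[0,\lambda)\to\mathbb{N}$, $\tau(0)=0$; strict means $\tau(i)<\tau(i+1)$ whenever $i+1<\lambda$. Satisfaction at $k$: $\bot$ never; $p$ iff $p\in H_k$; $\wedge,\vee$ usual; $\varphi\to\psi$ iff for both $\mathbf{M}'=\mathbf{M}$ and $\mathbf{M}'=(\langle\mathbf{T},\mathbf{T}\rangle,\tau)$,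 $\mathbf{M}',k\not\models\varphi$ or $\mathbf{M}',k\models\psi$; $\bullet_I\varphi$: $k>0$, $\varphi$ at $k-1$, $\tau(k)-\tau(k-1)\in I$; $\varphi\,\mathsf{S}_I\,\psi$: some $j\in[0,k]$ with $\tau(k)-\tau(j)\in I$, $\psi$ at $j$, $\varphi$ at all $i\in(j,k]$; $\varphi\,\mathsf{T}_I\,\psi$: for all such $j$, $\psi$ at $j$ or $\varphi$ at some $i\in(j,k]$; $\bigcirc_I\varphi$: $k+1<\lambda$, $\varphi$ at $k+1$, $\tau(k+1)-\tau(k)\in I$; $\varphi\,\mathsf{U}_I\,\psi$: some $j\in[k,\lambda)$ with $\tau(j)-\tau(k)\in I$, $\psi$ at $j$, $\varphi$ at all $i\in[k,j)$; $\varphi\,\mathsf{R}_I\,\psi$: for all such $j$, $\psi$ at $j$ or $\varphi$ at some $i\in[k,j)$. $\varphi\equiv\psi$ means $\mathbf{M},k\models\varphi\leftrightarrow\psi$ for all (here: strict) timed HT-traces $\mathbf{M}$ and all $k$. *)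

From Stdlib Require Import Arith.

Set Implicit Arguments.

(* Metric formulas over atoms of type A.  An interval I = [m, n) is given by
   its two natural bounds m (inclusive) and n (exclusive); [m, n] is [m, n+1). *)
Inductive formula (A : Type) : Type :=
| Atom : A -> formula A
| Bot : formula A
| Impl : formula A -> formula A -> formula A
| And : formula A -> formula A -> formula A
| Or : formula A -> formula A -> formula A
| Prev : nat -> nat -> formula A -> formula A
| Since : nat -> nat -> formula A -> formula A -> formula A
| Trigger : nat -> nat -> formula A -> formula A -> formula A
| Next : nat -> nat -> formula A -> formula A
| Until : nat -> nat -> formula A -> formula A -> formula A
| Release : nat -> nat -> formula A -> formula A -> formula A.

Arguments Bot {A}.

Definition Neg {A} (f : formula A) : formula A := Impl f Bot.
Definition Top {A} : formula A := Neg Bot.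
Definition Iff {A} (f g : formula A) : formula A := And (Impl f g) (Impl g f).
Definition Hist {A} m n (f : formula A) : formula A := Trigger m n Bot f.
Definition Once {A} m n (f : formula A) : formula A := Since m n Top f.
Definition WPrev {A} m n (f : formula A) : formula A :=
  Or (Prev m n f) (Neg (Prev m n Top)).
Definition Always {A} m n (f : formula A) : formula A := Release m n Bot f.
Definition Eventually {A} m n (f : formula A) : formula A := Until m n Top f.
Definition WNext {A} m n (f : formula A) : formula A :=
  Or (Next m n f) (Neg (Next m n Top)).

(* bigOr n f = f 1 \/ ... \/ f n  (for n >= 1);  bigAnd likewise. *)
Fixpoint bigOr {A} (n : nat) (f : nat -> formula A) : formula A :=
  match n with
  | 0 => Bot
  | S k => match k with
           | 0 => f 1
           | S _ => Or (bigOr k f) (f (S k))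
           end
  end.

Fixpoint bigAnd {A} (n : nat) (f : nat -> formula A) : formula A :=
  match n with
  | 0 => Top
  | S k => match k with
           | 0 => f 1
           | S _ => And (bigAnd k f) (f (S k))
           end
  end.

(* Trace length lambda : None = omega (infinite), Some l = finite length l. *)
Definition in_len (lam : option nat) (i : nat) : Prop :=
  match lam with None => True | Some l => i < l end.

Definition in_int (m n d : nat) : Prop := m <= d /\ d < n.

(* Satisfaction at position k of the timed HT-trace (<H,T>, tau) of length lam.
   H T : nat -> A -> Prop give the sets H_i, T_i of atoms. *)
Fixpoint sat {A} (H T : nat -> A -> Prop) (tau : nat -> nat) (lam : option nat)
    (f : formula A) (k : nat) {struct f} : Prop :=
  match f with
  | Atom p => H k p
  | Bot => False
  | Impl f1 f2 =>
      (sat H T tau lam f1 k -> sat H T tau lam f2 k) /\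
      (sat T T tau lam f1 k -> sat T T tau lam f2 k)
  | And f1 f2 => sat H T tau lam f1 k /\ sat H T tau lam f2 k
  | Or f1 f2 => sat H T tau lam f1 k \/ sat H T tau lam f2 k
  | Prev m n f1 =>
      0 < k /\ sat H T tau lam f1 (k - 1) /\ in_int m n (tau k - tau (k - 1))
  | Since m n f1 f2 =>
      exists j, j <= k /\ in_int m n (tau k - tau j) /\ sat H T tau lam f2 j /\
        forall i, j < i -> i <= k -> sat H T tau lam f1 i
  | Trigger m n f1 f2 =>
      forall j, j <= k -> in_int m n (tau k - tau j) ->
        sat H T tau lam f2 j \/ exists i, j < i /\ i <= k /\ sat H T tau lam f1 i
  | Next m n f1 =>
      in_len lam (k + 1) /\ sat H T tau lam f1 (k + 1) /\ in_int m n (tau (k + 1) - tau k)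
  | Until m n f1 f2 =>
      exists j, k <= j /\ in_len lam j /\ in_int m n (tau j - tau k) /\
        sat H T tau lam f2 j /\ forall i, k <= i -> i < j -> sat H T tau lam f1 i
  | Release m n f1 f2 =>
      forall j, k <= j -> in_len lam j -> in_int m n (tau j - tau k) ->
        sat H T tau lam f2 j \/ exists i, k <= i /\ i < j /\ sat H T tau lam f1 i
  end.

Definition strict_trace {A} (H T : nat -> A -> Prop) (tau : nat -> nat)
    (lam : option nat) : Prop :=
  (forall i, in_len lam i -> forall p, H i p -> T i p) /\
  tau 0 = 0 /\
  (forall i, in_len lam (i + 1) -> tau i < tau (i + 1)).

Definition equiv_strict {A} (f g : formula A) : Prop :=
  forall H T tau lam, strict_trace H T tau lam ->
    forall k, in_len lam k -> sat H T tau lam (Iff f g) k.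

From Pilot Require Import Defs.
From Stdlib Require Import PeanoNat Lia Classical.

(* On a strictly increasing timing the distance between two distinct positions
   is positive, so a witness at distance exactly n > 0 lies strictly after
   (before) the current position k.  The step from k to k + 1 (from k - 1 to k)
   then takes some time i with 1 <= i <= n, and the witness is at distance
   exactly n - i from the neighbouring position. *)

Definition strict_timing (tau : nat -> nat) (lam : option nat) : Prop :=
  forall i, in_len lam (i + 1) -> tau i < tau (i + 1).

Lemma in_len_le lam a b : a <= b -> in_len lam b -> in_len lam a.
Proof. destruct lam; simpl; lia. Qed.

Lemma equiv_strict_intro A (f g : formula A) :
  (forall H T tau lam, strict_timing tau lam -> forall k, in_len lam k ->
     (sat H T tau lam f k <-> sat H T tau lam g k)) ->
  equiv_strict f g.
Proof.
  intros E H T tau lam (_ & _ & Htau) k Hk.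
  pose proof (E H T tau lam Htau k Hk); pose proof (E T T tau lam Htau k Hk).
  unfold Iff; cbn [sat]; tauto.
Qed.

Section Semantics.

Context {A : Type}.
Variables (H T : nat -> A -> Prop) (tau : nat -> nat) (lam : option nat).
Notation sat := (sat H T tau lam).

Lemma sat_Top k : sat Top k.
Proof. split; intros []. Qed.

Lemma sat_bigOr n (f : nat -> formula A) k : 0 < n ->
  sat (bigOr n f) k <-> exists i, 1 <= i <= n /\ sat (f i) k.
Proof.
  induction n as [|[|n] IH]; intros Hn; [lia| |].
  - split; [intros Hf; exists 1; split; [lia | exact Hf]|].
    intros (i & Hi & Hf); now replace i with 1 in Hf by lia.
  - change (sat (bigOr (S n) f) k \/ sat (f (S (S n))) k <->
            exists i, 1 <= i <= S (S n) /\ sat (f i) k).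
    rewrite IH by lia. split.
    + intros [(i & Hi & Hf) | Hf]; [exists i | exists (S (S n))]; split; auto; lia.
    + intros (i & Hi & Hf).
      destruct (Nat.eq_dec i (S (S n))) as [->|]; [now right | left; exists i; split; auto; lia].
Qed.

Lemma sat_bigAnd n (f : nat -> formula A) k : 0 < n ->
  sat (bigAnd n f) k <-> forall i, 1 <= i <= n -> sat (f i) k.
Proof.
  induction n as [|[|n] IH]; intros Hn; [lia| |].
  - split; [intros Hf i Hi; now replace i with 1 by lia | intros Hf; apply Hf; lia].
  - change (sat (bigAnd (S n) f) k /\ sat (f (S (S n))) k <->
            forall i, 1 <= i <= S (S n) -> sat (f i) k).
    rewrite IH by lia. split.
    + intros [Hf Hlast] i Hi.
      destruct (Nat.eq_dec i (S (S n))) as [->|]; [exact Hlast | apply Hf; lia].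
    + intros Hf; split; [intros i Hi|]; apply Hf; lia.
Qed.

Lemma sat_WNext m n f k :
  sat (WNext m n f) k <->
  (in_len lam (k + 1) -> in_int m n (tau (k + 1) - tau k) -> sat f (k + 1)).
Proof.
  unfold WNext, Neg; cbn [Defs.sat]. split.
  - intros [(_ & Hf & _) | [Hno _]] Hk1 Hstep; [exact Hf|].
    exfalso; apply Hno; split; [|split]; auto using sat_Top.
  - intros Himp.
    destruct (classic (in_len lam (k + 1) /\ in_int m n (tau (k + 1) - tau k)))
      as [[Hk1 Hstep] | Hno]; [left; auto | right].
    split; intros (Hk1 & _ & Hstep); apply Hno; auto.
Qed.

Lemma sat_WPrev m n f k :
  sat (WPrev m n f) k <->
  (0 < k -> in_int m n (tau k - tau (k - 1)) -> sat f (k - 1)).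
Proof.
  unfold WPrev, Neg; cbn [Defs.sat]. split.
  - intros [(_ & Hf & _) | [Hno _]] Hk0 Hstep; [exact Hf|].
    exfalso; apply Hno; split; [|split]; auto using sat_Top.
  - intros Himp.
    destruct (classic (0 < k /\ in_int m n (tau k - tau (k - 1))))
      as [[Hk0 Hstep] | Hno]; [left; auto | right].
    split; intros (Hk0 & _ & Hstep); apply Hno; auto.
Qed.

Hypothesis Htau : strict_timing tau lam.

Lemma tau_mono a b : a <= b -> in_len lam b -> tau a <= tau b.
Proof.
  induction 1 as [|b Hab IH]; intros Hb; [lia|].
  rewrite <- Nat.add_1_r in Hb |- *.
  pose proof (Htau b Hb).
  enough (tau a <= tau b) by lia.
  apply IH, (in_len_le lam b (b + 1)); [lia | exact Hb].
Qed.

Lemma first_step k j : k < j -> in_len lam j ->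
  in_len lam (k + 1) /\ tau k < tau (k + 1) <= tau j.
Proof.
  intros Hkj Hj.
  assert (Hk1 : in_len lam (k + 1)) by (apply (in_len_le lam _ j); [lia | exact Hj]).
  split; [exact Hk1|].
  split; [exact (Htau k Hk1) | apply tau_mono; [lia | exact Hj]].
Qed.

Lemma last_step j k : j < k -> in_len lam k ->
  0 < k /\ tau j <= tau (k - 1) < tau k.
Proof.
  intros Hjk Hk.
  destruct (first_step j k Hjk Hk) as (_ & _ & Hjk').
  pose proof (Htau (k - 1)) as Hlast; rewrite Nat.sub_add in Hlast by lia.
  split; [lia|].
  split; [apply tau_mono; [lia | apply (in_len_le lam _ k); [lia | exact Hk]] | auto].
Qed.

Variables (psi phi : formula A) (n : nat).
Hypothesis Hn : 0 < n.

Lemma sat_Until_point k : in_len lam k ->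
  sat (Until n (n + 1) psi phi) k <->
  sat (And psi (bigOr n (fun i => Next i (i + 1) (Until (n - i) (n - i + 1) psi phi)))) k.
Proof.
  intros Hk. cbn [Defs.sat]. rewrite sat_bigOr by exact Hn. cbn [Defs.sat].
  unfold in_int. split.
  - intros (j & Hkj & Hj & Hd & Hphi & Hpsi).
    destruct (Nat.eq_dec k j) as [<-|]; [lia|].
    destruct (first_step k j ltac:(lia) Hj) as [Hk1 Hstep].
    split; [apply Hpsi; lia|].
    exists (tau (k + 1) - tau k); split; [lia|].
    split; [exact Hk1|]; split; [|lia].
    exists j; repeat split; auto; try lia.
    intros i Hi1 Hi2; apply Hpsi; lia.
  - intros (Hpsik & i & Hi & Hk1 & (j & Hkj & Hj & Hd & Hphi & Hpsi) & Hstep).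
    pose proof (tau_mono (k + 1) j Hkj Hj).
    exists j; repeat split; auto; try lia.
    intros i' Hi1 Hi2.
    destruct (Nat.eq_dec i' k) as [->|]; [exact Hpsik | apply Hpsi; lia].
Qed.

Lemma sat_Release_point k : in_len lam k ->
  sat (Release n (n + 1) psi phi) k <->
  sat (Or psi (bigAnd n (fun i => WNext i (i + 1) (Release (n - i) (n - i + 1) psi phi)))) k.
Proof.
  intros Hk. cbn [Defs.sat]. rewrite sat_bigAnd by exact Hn.
  setoid_rewrite sat_WNext. cbn [Defs.sat]. unfold in_int. split.
  - intros HR. destruct (classic (sat psi k)) as [Hpsik | Hpsik]; [now left | right].
    intros i Hi Hk1 Hstep j Hkj Hj Hd.
    destruct (first_step k j ltac:(lia) Hj) as (_ & Htk).
    destruct (HR j ltac:(lia) Hj ltac:(lia)) as [Hphi | (i' & Hi1 & Hi2 & Hpsi)];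
      [now left | right].
    exists i'. assert (i' <> k) by (intros ->; contradiction).
    repeat split; auto; lia.
  - intros HR j Hkj Hj Hd.
    destruct (Nat.eq_dec k j) as [<-|]; [lia|].
    destruct HR as [Hpsik | HR]; [right; exists k; repeat split; auto; lia|].
    destruct (first_step k j ltac:(lia) Hj) as [Hk1 Hstep].
    destruct (HR (tau (k + 1) - tau k) ltac:(lia) Hk1 ltac:(lia) j ltac:(lia) Hj ltac:(lia))
      as [Hphi | (i' & Hi1 & Hi2 & Hpsi)]; [now left | right].
    exists i'; repeat split; auto; lia.
Qed.

Lemma sat_Since_point k : in_len lam k ->
  sat (Since n (n + 1) psi phi) k <->
  sat (And psi (bigOr n (fun i => Prev i (i + 1) (Since (n - i) (n - i + 1) psi phi)))) k.
Proof.
  intros Hk. cbn [Defs.sat]. rewrite sat_bigOr by exact Hn. cbn [Defs.sat].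
  unfold in_int. split.
  - intros (j & Hjk & Hd & Hphi & Hpsi).
    destruct (Nat.eq_dec j k) as [->|]; [lia|].
    destruct (last_step j k ltac:(lia) Hk) as [Hk0 Hstep].
    split; [apply Hpsi; lia|].
    exists (tau k - tau (k - 1)); split; [lia|].
    split; [exact Hk0|]; split; [|lia].
    exists j; repeat split; auto; try lia.
    intros i Hi1 Hi2; apply Hpsi; lia.
  - intros (Hpsik & i & Hi & Hk0 & (j & Hjk & Hd & Hphi & Hpsi) & Hstep).
    destruct (last_step j k ltac:(lia) Hk) as [_ Htj].
    exists j; repeat split; auto; try lia.
    intros i' Hi1 Hi2.
    destruct (Nat.eq_dec i' k) as [->|]; [exact Hpsik | apply Hpsi; lia].
Qed.

Lemma sat_Trigger_point k : in_len lam k ->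
  sat (Trigger n (n + 1) psi phi) k <->
  sat (Or psi (bigAnd n (fun i => WPrev i (i + 1) (Trigger (n - i) (n - i + 1) psi phi)))) k.
Proof.
  intros Hk. cbn [Defs.sat]. rewrite sat_bigAnd by exact Hn.
  setoid_rewrite sat_WPrev. cbn [Defs.sat]. unfold in_int. split.
  - intros HR. destruct (classic (sat psi k)) as [Hpsik | Hpsik]; [now left | right].
    intros i Hi Hk0 Hstep j Hjk Hd.
    destruct (last_step j k ltac:(lia) Hk) as (_ & Htj).
    destruct (HR j ltac:(lia) ltac:(lia)) as [Hphi | (i' & Hi1 & Hi2 & Hpsi)];
      [now left | right].
    exists i'. assert (i' <> k) by (intros ->; contradiction).
    repeat split; auto; lia.
  - intros HR j Hjk Hd.
    destruct (Nat.eq_dec j k) as [->|]; [lia|].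
    destruct HR as [Hpsik | HR]; [right; exists k; repeat split; auto; lia|].
    destruct (last_step j k ltac:(lia) Hk) as [Hk0 Hstep].
    destruct (HR (tau k - tau (k - 1)) ltac:(lia) Hk0 ltac:(lia) j ltac:(lia) ltac:(lia))
      as [Hphi | (i' & Hi1 & Hi2 & Hpsi)]; [now left | right].
    exists i'; repeat split; auto; lia.
Qed.

End Semantics.

Section DerivedOperators.

Context {A : Type}.
Variables (H T : nat -> A -> Prop) (tau : nat -> nat) (lam : option nat).
Hypothesis Htau : strict_timing tau lam.
Variables (phi : formula A) (n : nat).
Hypothesis Hn : 0 < n.
Notation sat := (sat H T tau lam).

Lemma sat_Eventually_point k : in_len lam k ->
  sat (Eventually n (n + 1) phi) k <->
  sat (bigOr n (fun i => Next i (i + 1) (Eventually (n - i) (n - i + 1) phi))) k.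
Proof.
  intros Hk. etransitivity; [apply sat_Until_point with (psi := Top); assumption|].
  cbn [Defs.sat]. pose proof (sat_Top H T tau lam k). tauto.
Qed.

Lemma sat_Always_point k : in_len lam k ->
  sat (Always n (n + 1) phi) k <->
  sat (bigAnd n (fun i => WNext i (i + 1) (Always (n - i) (n - i + 1) phi))) k.
Proof.
  intros Hk. etransitivity; [apply sat_Release_point with (psi := Bot); assumption|].
  cbn [Defs.sat]. tauto.
Qed.

Lemma sat_Once_point k : in_len lam k ->
  sat (Once n (n + 1) phi) k <->
  sat (bigOr n (fun i => Prev i (i + 1) (Once (n - i) (n - i + 1) phi))) k.
Proof.
  intros Hk. etransitivity; [apply sat_Since_point with (psi := Top); assumption|].
  cbn [Defs.sat]. pose proof (sat_Top H T tau lam k). tauto.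
Qed.

Lemma sat_Hist_point k : in_len lam k ->
  sat (Hist n (n + 1) phi) k <->
  sat (bigAnd n (fun i => WPrev i (i + 1) (Hist (n - i) (n - i + 1) phi))) k.
Proof.
  intros Hk. etransitivity; [apply sat_Trigger_point with (psi := Bot); assumption|].
  cbn [Defs.sat]. tauto.
Qed.

End DerivedOperators.

Theorem lemma2 (A : Type) (psi phi : formula A) (n : nat) (Hn : 0 < n) :
  equiv_strict (Until n (n + 1) psi phi)
    (And psi (bigOr n (fun i => Next i (i + 1) (Until (n - i) (n - i + 1) psi phi)))) /\
  equiv_strict (Release n (n + 1) psi phi)
    (Or psi (bigAnd n (fun i => WNext i (i + 1) (Release (n - i) (n - i + 1) psi phi)))) /\
  equiv_strict (Eventually n (n + 1) phi)
    (bigOr n (fun i => Next i (i + 1) (Eventually (n - i) (n - i + 1) phi))) /\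
  equiv_strict (Always n (n + 1) phi)
    (bigAnd n (fun i => WNext i (i + 1) (Always (n - i) (n - i + 1) phi))) /\
  equiv_strict (Since n (n + 1) psi phi)
    (And psi (bigOr n (fun i => Prev i (i + 1) (Since (n - i) (n - i + 1) psi phi)))) /\
  equiv_strict (Trigger n (n + 1) psi phi)
    (Or psi (bigAnd n (fun i => WPrev i (i + 1) (Trigger (n - i) (n - i + 1) psi phi)))) /\
  equiv_strict (Once n (n + 1) phi)
    (bigOr n (fun i => Prev i (i + 1) (Once (n - i) (n - i + 1) phi))) /\
  equiv_strict (Hist n (n + 1) phi)
    (bigAnd n (fun i => WPrev i (i + 1) (Hist (n - i) (n - i + 1) phi))).
Proof.
  repeat match goal with |- _ /\ _ => split end;
    apply equiv_strict_intro; intros H T tau lam Htau k Hk.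
  - now apply sat_Until_point.
  - now apply sat_Release_point.
  - now apply sat_Eventually_point.
  - now apply sat_Always_point.
  - now apply sat_Since_point.
  - now apply sat_Trigger_point.
  - now apply sat_Once_point.
  - now apply sat_Hist_point.
Qed.
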